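(* Let $H$ be a finitely generated group, let $\phi\in\operatorname{Aut}(H)$ and let $K$ be a proper subgroup of $H$. Let $G=H\ast_{(K,\phi)}=\langle H, t;\ tkt^{-1}=\phi(k),\ k\in K\rangle$. If the group $N_H(K)/K$ is not residually finite, then $G$ is not residually finite.
   Context: For a group $H$, $\phi\in\operatorname{Aut}(H)$ and a proper subgroup $K\lneq H$, the automorphism-induced HNN-extension $H\ast_{(K,\phi)}$ is the group given by the relative presentation $\langle H, t;\ tkt^{-1}=\phi(k),\ k\in K\rangle$. $N_H(K)$ denotes the normalizer of $K$ in $H$. *)

From HB Require Import structures.
From mathcomp Require Import all_boot all_fingroup.

Set Implicit Arguments.
Unset Strict Implicit.
Unset Printing Implicit Defensive.

Local Open Scope group_scope.

Inductive generated (H : groupType) (s : seq H) : H -> Prop :=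
  | gen_base x : x \in s -> generated s x
  | gen_one : generated s 1
  | gen_mul x y : generated s x -> generated s y -> generated s (x * y)
  | gen_inv x : generated s x -> generated s x^-1.

Definition finitely_generated (H : groupType) : Prop :=
  exists s : seq H, forall h : H, generated s h.

Definition is_subgroup (H : groupType) (K : {pred H}) : Prop :=
  [/\ 1 \in K, {in K &, forall x y, x * y \in K} & {in K, forall x, x^-1 \in K}].

Definition proper_subgroup (H : groupType) (K : {pred H}) : Prop :=
  is_subgroup K /\ exists h : H, h \notin K.

Definition group_hom (G L : groupType) (f : G -> L) : Prop :=
  {morph f : x y / x * y}.

Definition group_aut (H : groupType) (phi : H -> H) : Prop :=
  group_hom phi /\ bijective phi.

Definition normalizer (H : groupType) (K : {pred H}) : H -> Prop :=
  fun h => forall k : H, (k \in K) = (h * k * h^-1 \in K).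

(* G (with iota : H -> G and stable letter t) is the HNN extension
   <H, t ; t k t^-1 = phi k, k in K>, characterised by its universal property
   (this determines G, iota, t up to unique isomorphism). *)
Definition is_HNN_extension (H : groupType) (K : {pred H}) (phi : H -> H)
    (G : groupType) (iota : H -> G) (t : G) : Prop :=
  [/\ group_hom iota,
      (forall k, k \in K -> t * iota k * t^-1 = iota (phi k)) &
      (forall (L : groupType) (f : H -> L) (s : L),
         group_hom f ->
         (forall k, k \in K -> s * f k * s^-1 = f (phi k)) ->
         exists F : G -> L,
           [/\ group_hom F, (forall h, F (iota h) = f h), F t = s &
               forall F' : G -> L, group_hom F' ->
                 (forall h, F' (iota h) = f h) -> F' t = s ->
                 forall g, F' g = F g])].

Definition residually_finite (G : groupType) : Prop :=
  forall g : G, g != 1 ->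
    exists (F : finGroupType) (f : G -> F), group_hom f /\ f g != 1.

(* Residual finiteness of the quotient group N/K, for K normal in N,
   stated through the correspondence between homomorphisms N/K -> F and
   homomorphisms N -> F that are trivial on K: every non-trivial element
   nK of N/K (i.e. n in N \ K) is not killed by some homomorphism of N/K
   to a finite group. *)
Definition quotient_residually_finite (H : groupType) (N : H -> Prop)
    (K : {pred H}) : Prop :=
  forall n : H, N n -> n \notin K ->
    exists (F : finGroupType) (f : H -> F),
      [/\ (forall x y, N x -> N y -> f (x * y) = f x * f y),
          (forall k, k \in K -> f k = 1) &
          f n != 1].

From HB Require Import structures.
From mathcomp Require Import all_boot all_fingroup.
From mathcomp Require Import boolp.

(* Let n lie in N_H(K) but not in K, and put c := t^-1 phi(n) t.  Conjugation
   by c and by n agree on K, so u := n^-1 c centralises K, whereas n and c do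
   not commute in G: a permutation representation of G on three copies of H
   separates them.  If f : G -> F is a finite quotient with f [n, c] <> 1, the
   core Q of C_F(f u) in f(N_H(K)) contains f(K) but not f(n), so
   N_H(K) -> f(N_H(K)) / Q is a finite quotient of N_H(K)/K in which nK
   survives. *)

Set Implicit Arguments.
Unset Strict Implicit.
Unset Printing Implicit Defensive.
Local Open Scope group_scope.

Record bij (X : Type) := Bij {
  fw : X -> X; bw : X -> X; fwK : cancel fw bw; bwK : cancel bw fw }.

Lemma bijP (X : Type) (a b : bij X) : fw a =1 fw b -> a = b.
Proof.
case: a b => f g fK gK [f' g' fK' gK'] /= /funext eq_f; subst f'.
have eq_g : g = g' by apply: funext => x; rewrite -{1}(gK' x) fK.
by subst g'; congr Bij; apply: Prop_irrelevance.
Qed.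

HB.instance Definition _ (X : Type) := gen_eqMixin (bij X).
HB.instance Definition _ (X : Type) := gen_choiceMixin (bij X).

Section BijGroup.
Variable X : Type.
Implicit Types a b c : bij X.

Lemma bij_mul_fK a b : cancel (fw a \o fw b) (bw b \o bw a).
Proof. by move=> x /=; rewrite !fwK. Qed.
Lemma bij_mul_bK a b : cancel (bw b \o bw a) (fw a \o fw b).
Proof. by move=> x /=; rewrite !bwK. Qed.

Definition bij_mul a b := Bij (bij_mul_fK a b) (bij_mul_bK a b).
Definition bij_one : bij X := Bij (frefl id) (frefl id).
Definition bij_inv a := Bij (bwK a) (fwK a).

Lemma bij_mulA : associative bij_mul. Proof. by move=> a b c; apply: bijP. Qed.
Lemma bij_mul1g : left_id bij_one bij_mul. Proof. by move=> a; apply: bijP. Qed.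
Lemma bij_mulg1 : right_id bij_one bij_mul. Proof. by move=> a; apply: bijP. Qed.
Lemma bij_mulVg : left_inverse bij_one bij_inv bij_mul.
Proof. by move=> a; apply: bijP => x /=; rewrite fwK. Qed.
Lemma bij_mulgV : right_inverse bij_one bij_inv bij_mul.
Proof. by move=> a; apply: bijP => x /=; rewrite bwK. Qed.
End BijGroup.

HB.instance Definition _ (X : Type) :=
  isGroup.Build (bij X) (@bij_mulA X) (@bij_mul1g X) (@bij_mulg1 X)
    (@bij_mulVg X) (@bij_mulgV X).

Lemma fwM (X : Type) (a b : bij X) x : fw (a * b) x = fw a (fw b x).
Proof. by []. Qed.

Lemma fwV (X : Type) (a : bij X) x : fw a^-1 x = bw a x.
Proof. by []. Qed.

Section GroupHom.
Variables (A B : groupType) (f : A -> B).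
Hypothesis fM : group_hom f.

Lemma group_hom1 : f 1 = 1.
Proof. by apply: (@mulgI _ (f 1)); rewrite -fM !mulg1. Qed.

Lemma group_homV x : f x^-1 = (f x)^-1.
Proof. by apply: (@mulgI _ (f x)); rewrite -fM !mulgV group_hom1. Qed.

Lemma group_homJ x y : f (x ^ y) = f x ^ f y.
Proof. by rewrite /conjg !fM group_homV. Qed.

Lemma group_homR x y : f [~ x, y] = [~ f x, f y].
Proof. by rewrite /commg fM group_homJ group_homV. Qed.

Lemma group_hom_commute x y : commute x y -> commute (f x) (f y).
Proof. by move=> xy; rewrite /commute -!fM xy. Qed.
End GroupHom.

Lemma group_hom_comp (A B C : groupType) (f : A -> B) (g : B -> C) :
  group_hom f -> group_hom g -> group_hom (g \o f).
Proof. by move=> fM gM x y /=; rewrite fM gM. Qed.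

Section Subgroup.
Variables (H : groupType) (K : {pred H}).
Hypothesis Ksub : is_subgroup K.

Lemma subgroup1 : 1 \in K.
Proof. by case: Ksub. Qed.

Lemma subgroupMl k x : k \in K -> (k * x \in K) = (x \in K).
Proof.
case: Ksub => _ KM KV kK; apply/idP/idP => [kxK|]; last exact: KM.
by rewrite -(mulKg k x) KM ?KV.
Qed.
End Subgroup.

Lemma normalizer1 (H : groupType) (K : {pred H}) : normalizer K 1.
Proof. by move=> k; rewrite mul1g invg1 mulg1. Qed.

Lemma normalizerM (H : groupType) (K : {pred H}) x y :
  normalizer K x -> normalizer K y -> normalizer K (x * y).
Proof.
move=> Nx Ny k; rewrite (Ny k) (Nx (y * k * y^-1)) invMg.
by congr (_ \in K); rewrite !mulgA.
Qed.

Section PermutationModel.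
Variables (H : groupType) (K : {pred H}) (phi psi : H -> H).
Hypotheses (phiM : group_hom phi) (phiK : cancel phi psi) (psiK : cancel psi phi).
Hypothesis Ksub : is_subgroup K.

(* H acts on the first coordinate of H x Z/3 by left multiplication; the
   stable letter acts by phi, moving to the next sheet exactly over K. *)
Let X := (H * 'I_3)%type.

Definition lmul_fun (h : H) (p : X) : X := (h * p.1, p.2).

Lemma lmul_funK h : cancel (lmul_fun h) (lmul_fun h^-1).
Proof. by case=> y i; rewrite /lmul_fun /= mulKg. Qed.
Lemma lmul_funVK h : cancel (lmul_fun h^-1) (lmul_fun h).
Proof. by case=> y i; rewrite /lmul_fun /= mulKVg. Qed.

Definition lmul_bij h : bij X := Bij (lmul_funK h) (lmul_funVK h).

Definition stable_fun (p : X) : X :=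
  (phi p.1, if p.1 \in K then ordS p.2 else p.2).
Definition stable_inv (p : X) : X :=
  (psi p.1, if psi p.1 \in K then ord_pred p.2 else p.2).

Lemma stable_funK : cancel stable_fun stable_inv.
Proof. by case=> y i; rewrite /stable_inv /= phiK; case: (y \in K); rewrite ?ordSK. Qed.
Lemma stable_invK : cancel stable_inv stable_fun.
Proof.
by case=> y i; rewrite /stable_fun /= psiK; case: (psi y \in K); rewrite ?ord_predK.
Qed.

Definition stable_bij : bij X := Bij stable_funK stable_invK.

Lemma lmul_bij_hom : group_hom lmul_bij.
Proof. by move=> x y; apply: bijP => -[p i]; rewrite /= /lmul_fun /= mulgA. Qed.

Lemma stable_bij_conj k :
  k \in K -> stable_bij * lmul_bij k * stable_bij^-1 = lmul_bij (phi k).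
Proof.
move=> kK; apply: bijP => -[y i].
rewrite !fwM fwV /= /stable_fun /stable_inv /lmul_fun /= phiM psiK subgroupMl //.
by case: (psi y \in K); rewrite ?ord_predK.
Qed.

(* At (1, 0) the left side ends on sheet 1 and the right side on sheet 2 or 0,
   depending on whether n^2 lies in K; hence three sheets. *)
Lemma lmul_stable_noncommute n : n \notin K ->
  ~ commute (lmul_bij n) (lmul_bij (phi n) ^ stable_bij).
Proof.
move=> nK /(congr1 (fun b => fw b (1, ord0))).
rewrite !fwM !fwV /= /stable_fun /stable_inv /lmul_fun /= subgroup1 //.
rewrite group_hom1 // !mulg1 phiK (negbTE nK) -phiM phiK.
by case: (n * n \in K) => -[].
Qed.

Lemma HNN_commg_neq1 (G : groupType) (iota : H -> G) (t : G) n :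
  is_HNN_extension K phi iota t -> n \notin K -> [~ iota n, iota (phi n) ^ t] != 1.
Proof.
move=> [_ _ univ] nK.
have [Phi [PhiM Phi_iota Phi_t _]] := univ _ _ _ lmul_bij_hom stable_bij_conj.
apply/negP => /commgP /(group_hom_commute PhiM).
by rewrite group_homJ // !Phi_iota Phi_t; apply: lmul_stable_noncommute.
Qed.
End PermutationModel.

Section HNNExtension.
Variables (H : groupType) (K : {pred H}) (phi : H -> H).
Variables (G : groupType) (iota : H -> G) (t : G).
Hypotheses (phiM : group_hom phi) (iotaM : group_hom iota).
Hypothesis t_conj : forall k, k \in K -> t * iota k * t^-1 = iota (phi k).

Lemma iota_conj_stable k : k \in K -> iota (phi k) ^ t = iota k.
Proof. by move=> kK; rewrite -t_conj // conjgE !mulgA mulVg mul1g mulgVK. Qed.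

Lemma stable_conj_normalizer n k : normalizer K n -> k \in K ->
  iota (phi n) ^ t * iota k = iota (n * k * n^-1) * iota (phi n) ^ t.
Proof.
move=> Nn kK; have nkK : n * k * n^-1 \in K by rewrite -Nn.
rewrite -(iota_conj_stable kK) -(iota_conj_stable nkK) -!conjMg -!iotaM -!phiM.
by rewrite mulgKV.
Qed.

Lemma stable_conj_centralizes n k : normalizer K n -> k \in K ->
  commute (iota k) ((iota n)^-1 * iota (phi n) ^ t).
Proof.
move=> Nn kK; rewrite /commute -mulgA stable_conj_normalizer // !iotaM.
by rewrite group_homV // !mulgA mulVg mul1g.
Qed.
End HNNExtension.

Section CentralizerCore.
Variables (H : groupType) (K : {pred H}) (F : finGroupType) (a : H -> F) (u : F).
Hypotheses (aM : group_hom a) (Ku : forall k, k \in K -> commute (a k) u).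

Let S : {set F} := [set y | `[< exists2 x, normalizer K x & a x = y >]].

Lemma normalizer_imageP y : reflect (exists2 x, normalizer K x & a x = y) (y \in S).
Proof. by rewrite inE; apply: asboolP. Qed.

Lemma normalizer_image_group : group_set S.
Proof.
apply/group_setP; split.
  by apply/normalizer_imageP; exists 1; [exact: normalizer1 | exact: group_hom1].
move=> _ _ /normalizer_imageP[x Nx <-] /normalizer_imageP[y Ny <-].
by apply/normalizer_imageP; exists (x * y); [exact: normalizerM | exact: aM].
Qed.

Let Q := gcore 'C[u] (Group normalizer_image_group).

Lemma normalizer_image_norm_core x : normalizer K x -> a x \in 'N(Q).
Proof.
move=> Nx; apply: subsetP (gcore_norm _ _) _ _.
by apply/normalizer_imageP; exists x.
Qed.

Lemma image_sub_core k : k \in K -> a k \in Q.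
Proof.
move=> kK; apply/bigcapP => _ /normalizer_imageP[x Nx <-].
rewrite mem_conjg conjgE invgK -group_homV // -!aM.
by apply/cent1P; apply: Ku; rewrite mulgA -Nx.
Qed.

Lemma centralizer_core_separates n : normalizer K n -> ~ commute (a n) u ->
  exists (F' : finGroupType) (f : H -> F'),
    [/\ (forall x y, normalizer K x -> normalizer K y -> f (x * y) = f x * f y),
        (forall k, k \in K -> f k = 1) & f n != 1].
Proof.
move=> Nn not_com; exists (coset_of Q), (fun x => coset Q (a x)); split.
- by move=> x y Nx Ny; rewrite aM morphM ?normalizer_image_norm_core.
- by move=> k kK; rewrite coset_id ?image_sub_core.
- apply/eqP => /(coset_idr (normalizer_image_norm_core Nn)).
  by move/(subsetP (gcore_sub _ _))/cent1P.
Qed.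
End CentralizerCore.

Theorem corollary1p1 (H : groupType) (K : {pred H}) (phi : H -> H)
    (G : groupType) (iota : H -> G) (t : G) :
  finitely_generated H ->
  group_aut phi ->
  proper_subgroup K ->
  is_HNN_extension K phi iota t ->
  ~ quotient_residually_finite (normalizer K) K ->
  ~ residually_finite G.
Proof.
move=> _ [phiM [psi phiK psiK]] [Ksub _] HNN not_qRF RF.
apply: not_qRF => n Nn nK; have [iotaM t_conj _] := HNN.
have [F [f [fM f_comm]]] := RF _ (HNN_commg_neq1 phiM phiK psiK Ksub HNN nK).
pose u := f ((iota n)^-1 * iota (phi n) ^ t).
apply: (@centralizer_core_separates _ _ _ _ u (group_hom_comp iotaM fM)) => // [k kK|].
  exact (group_hom_commute fM (stable_conj_centralizes phiM iotaM t_conj Nn kK)).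
rewrite /u /= fM group_homV // => /(commuteM (commute_refl _)).
by rewrite mulKVg => /commgP; rewrite -group_homR //; apply/negP.
Qed.
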